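(* The only solution $(m,p,q,x)$ in positive integers, with $p$ and $q$ odd primes, of the equation $$x^2+q^{2m}=2\cdot 17^p$$ is $(m,p,q,x)=(1,3,5,99)$. *)

From mathcomp Require Import all_boot.


(* As 17 = (4 + i)(4 - i) in Z[i], a descent on p shows that every primitive solution of
   x^2 + y^2 = 2 * 17^p is, up to signs and order, the pair of coordinates of (1 + i)(4 + i)^p.
   Modulo 9 * 25 * 13 * 29 these coordinates are periodic in p with period 840, and the finite
   table shows: for odd p one coordinate is divisible by 3 and the other by 5, so q is 3 or 5;
   9 (resp. 25) divides it only when 3 (resp. 5) divides p, which forces m = 1 and a coordinate
   equal to 3, 5 or their negatives.  Since (4 + i)^4 = 1 + 5 (32 + 48 i), a lifting-the-exponent
   argument along p -> p + 4 shows this happens only for p = 1 and p = 3 (5^2 + 99^2 = 2 * 17^3).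
   For q = 17 one divides out 17^2 until x^2 + 1 = 2 * 17^j, impossible because neither
   coordinate is a unit. *)
From Stdlib Require Import ZArith Lia ZifyNat Ring List Znumtheory.
Local Open Scope Z_scope.
Local Open Scope bool_scope.

Record gauss := Gauss { gre : Z; gim : Z }.

Definition gconst (k : Z) := Gauss k 0.
Definition gadd (a b : gauss) := Gauss (gre a + gre b) (gim a + gim b).
Definition gmul (a b : gauss) :=
  Gauss (gre a * gre b - gim a * gim b) (gre a * gim b + gim a * gre b).
Definition gopp (a : gauss) := Gauss (- gre a) (- gim a).
Definition gsub (a b : gauss) := gadd a (gopp b).

Declare Scope gauss_scope.
Delimit Scope gauss_scope with G.
Bind Scope gauss_scope with gauss.
Notation "k %:G" := (gconst k) (at level 2, format "k %:G").
Infix "+" := gadd : gauss_scope.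
Infix "-" := gsub : gauss_scope.
Infix "*" := gmul : gauss_scope.

Lemma gauss_eq a b : gre a = gre b -> gim a = gim b -> a = b.
Proof. destruct a, b; simpl; intros; subst; reflexivity. Qed.

Ltac gauss_ext := apply gauss_eq; cbn [gre gim gconst gadd gmul gopp gsub]; ring.

Lemma gauss_ring : ring_theory 0%:G 1%:G gadd gmul gsub gopp (@eq gauss).
Proof. constructor; intros; gauss_ext. Qed.

Lemma gconst_morph :
  ring_morph 0%:G 1%:G gadd gmul gsub gopp (@eq gauss) 0 1 Z.add Z.mul Z.sub Z.opp Z.eqb gconst.
Proof.
  constructor; try (intros; gauss_ext).
  intros x y Hxy. apply Z.eqb_eq in Hxy. subst. reflexivity.
Qed.

Ltac gconst_cst t :=
  match t with
  | gconst ?z => match isZcst z with true => z | _ => constr:(NotConstant) end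
  | _ => constr:(NotConstant)
  end.
Add Ring gauss_ring : gauss_ring (morphism gconst_morph, constants [gconst_cst]).

Fixpoint gpow (a : gauss) (n : nat) : gauss :=
  match n with O => 1%:G | S k => (gpow a k * a)%G end.
Infix "^" := gpow : gauss_scope.

Local Open Scope gauss_scope.

Lemma gpow_add a m n : a ^ (m + n) = a ^ m * a ^ n.
Proof.
  induction n as [|n IH]; [rewrite Nat.add_0_r; cbn [gpow]; ring|].
  rewrite Nat.add_succ_r. cbn [gpow]. rewrite IH. ring.
Qed.

Lemma gpow_mul a m n : a ^ (m * n) = (a ^ m) ^ n.
Proof.
  induction n as [|n IH]; [rewrite Nat.mul_0_r; reflexivity|].
  rewrite Nat.mul_succ_r, gpow_add, IH. cbn [gpow]. ring.
Qed.

Lemma gconst_add a b : (a + b)%Z%:G = a%:G + b%:G. Proof. gauss_ext. Qed.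
Lemma gconst_mul a b : (a * b)%Z%:G = a%:G * b%:G. Proof. gauss_ext. Qed.

Local Close Scope gauss_scope.

Definition sol (n : nat) : gauss := (Gauss 1 1 * Gauss 4 1 ^ n)%G.
Definition solx (n : nat) : Z := gre (sol n).
Definition soly (n : nat) : Z := gim (sol n).

Lemma solx_S n : solx (S n) = 4 * solx n - soly n.
Proof. unfold solx, soly, sol; simpl gpow; cbn [gre gim gmul]; ring. Qed.

Lemma soly_S n : soly (S n) = solx n + 4 * soly n.
Proof. unfold solx, soly, sol; simpl gpow; cbn [gre gim gmul]; ring. Qed.

Lemma prime_of_gcd_check p :
  1 < p -> forallb (fun n => Z.gcd n p =? 1) (map Z.of_nat (seq 1 (Z.to_nat p - 1))) = true ->
  prime p.
Proof.
  intros Hp Hc. apply prime_intro; [exact Hp|]. intros n Hn. apply Zgcd_1_rel_prime.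
  rewrite forallb_forall in Hc. apply Z.eqb_eq, Hc, in_map_iff.
  exists (Z.to_nat n). split; [lia|]. apply in_seq. lia.
Qed.

Lemma prime_5 : prime 5.
Proof. apply prime_of_gcd_check; [lia | reflexivity]. Qed.

Lemma prime_17 : prime 17.
Proof. apply prime_of_gcd_check; [lia | reflexivity]. Qed.

Lemma mul_mod_prime_neq0 p a b :
  prime p -> a mod p <> 0 -> b mod p <> 0 -> (a * b) mod p <> 0.
Proof.
  intros Hp Ha Hb Hab. assert (Hp0 : p <> 0) by (pose proof (prime_ge_2 p Hp); lia).
  apply Z.mod_divide in Hab; [|exact Hp0].
  destruct (prime_mult p Hp a b Hab) as [H|H]; apply Z.mod_divide in H; auto.
Qed.


Lemma sum_sq_mod17 x y :
  (x ^ 2 + y ^ 2) mod 17 = 0 -> (x + 4 * y) mod 17 = 0 \/ (x - 4 * y) mod 17 = 0.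
Proof.
  intros H. destruct (Z.eq_dec ((x + 4 * y) mod 17) 0) as [?|H1]; [left; assumption|right].
  destruct (Z.eq_dec ((x - 4 * y) mod 17) 0) as [?|H2]; [assumption|exfalso].
  apply (mul_mod_prime_neq0 17 _ _ prime_17 H1 H2).
  replace ((x + 4 * y) * (x - 4 * y)) with (x ^ 2 + y ^ 2 + (- y ^ 2) * 17) by ring.
  rewrite Z_mod_plus_full. exact H.
Qed.

Definition primitive17 (x y : Z) : Prop := ~ (x mod 17 = 0 /\ y mod 17 = 0).

Definition sol_pair (k : nat) (x y : Z) : Prop :=
  (Z.abs x = Z.abs (solx k) /\ Z.abs y = Z.abs (soly k)) \/
  (Z.abs x = Z.abs (soly k) /\ Z.abs y = Z.abs (solx k)).

Lemma pow17_S k : 17 ^ Z.of_nat (S k) = 17 * 17 ^ Z.of_nat k.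
Proof. rewrite Nat2Z.inj_succ, Z.pow_succ_r by lia. ring. Qed.

Lemma solx_sub_4soly_mod17 k : (solx (S k) - 4 * soly (S k)) mod 17 = 0.
Proof.
  rewrite solx_S, soly_S.
  replace (4 * solx k - soly k - 4 * (solx k + 4 * soly k)) with (- soly k * 17) by ring.
  apply Z_mod_mult.
Qed.

Lemma abs_eq_cases a b : Z.abs a = Z.abs b -> a = b \/ a = - b.
Proof. lia. Qed.

Lemma sol_pair_descent k x y :
  (forall x' y', x' ^ 2 + y' ^ 2 = 2 * 17 ^ Z.of_nat k -> primitive17 x' y' -> sol_pair k x' y') ->
  x ^ 2 + y ^ 2 = 2 * 17 ^ Z.of_nat (S k) -> primitive17 x y -> (x + 4 * y) mod 17 = 0 ->
  sol_pair (S k) x y.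
Proof.
  intros IH Hsum Hprim Hxy.
  (* (x + i y) = (x' + i y') (4 - i) *)
  assert (Hx'y' : exists x' y', x = 4 * x' + y' /\ y = 4 * y' - x').
  { exists (4 * ((x + 4 * y) / 17) - y), ((x + 4 * y) / 17).
    lia. }
  clear Hxy. destruct Hx'y' as (x' & y' & -> & ->).
  assert (Hsum' : x' ^ 2 + y' ^ 2 = 2 * 17 ^ Z.of_nat k) by (rewrite pow17_S in Hsum; nia).
  assert (Hprim' : primitive17 x' y') by (intros [h1 h2]; apply Hprim; lia).
  assert (Hk : (solx k = 1 /\ soly k = 1) \/ exists e, solx k - 4 * soly k = 17 * e).
  { destruct k; [left; split; reflexivity | right].
    exists ((solx (S k) - 4 * soly (S k)) / 17). pose proof (solx_sub_4soly_mod17 k). lia. }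
  specialize (IH x' y' Hsum' Hprim'). unfold sol_pair, primitive17 in *.
  rewrite solx_S, soly_S. clear Hsum Hsum'.
  destruct IH as [[h1 h2]|[h1 h2]];
  apply abs_eq_cases in h1, h2;
  destruct h1 as [->| ->]; destruct h2 as [->| ->];
  destruct Hk as [[-> ->]|[e He]];
  first [left; split; clear Hprim; lia | right; split; clear Hprim; lia | exfalso; apply Hprim; lia].
Qed.

Lemma sol_pair_of_sum_sq k x y :
  x ^ 2 + y ^ 2 = 2 * 17 ^ Z.of_nat k -> primitive17 x y -> sol_pair k x y.
Proof.
  revert x y; induction k as [|k IH]; intros x y Hsum Hprim.
  - left. change (solx 0) with 1. change (soly 0) with 1. simpl in Hsum.
    assert (Hx : x = -1 \/ x = 0 \/ x = 1) by nia.
    assert (Hy : y = -1 \/ y = 0 \/ y = 1) by nia.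
    destruct Hx as [->|[->| ->]]; destruct Hy as [->|[->| ->]]; simpl in Hsum; lia.
  - assert (H17 : (x ^ 2 + y ^ 2) mod 17 = 0).
    { rewrite Hsum, pow17_S.
      replace (2 * (17 * 17 ^ Z.of_nat k)) with (2 * 17 ^ Z.of_nat k * 17) by ring.
      apply Z_mod_mult. }
    destruct (sum_sq_mod17 x y H17) as [Hxy|Hxy].
    + exact (sol_pair_descent k x y IH Hsum Hprim Hxy).
    + assert (Hneg : sol_pair (S k) x (- y)).
      { apply sol_pair_descent; [exact IH | lia | unfold primitive17 in *; lia | lia]. }
      unfold sol_pair in *. rewrite Z.abs_opp in Hneg. exact Hneg.
Qed.

(* For odd [n], [sol3 n] is the coordinate of [sol n] divisible by 3, [sol5 n] the one divisible by 5. *)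
Definition sol3 (n : nat) : Z := if (n mod 4 =? 1)%nat then solx n else soly n.
Definition sol5 (n : nat) : Z := if (n mod 4 =? 1)%nat then soly n else solx n.

Lemma sol_pair_sol35 k x y :
  sol_pair k x y ->
  (Z.abs x = Z.abs (sol5 k) /\ Z.abs y = Z.abs (sol3 k)) \/
  (Z.abs x = Z.abs (sol3 k) /\ Z.abs y = Z.abs (sol5 k)).
Proof. unfold sol_pair, sol3, sol5. destruct (k mod 4 =? 1)%nat; tauto. Qed.

(* 84825 = 9 * 25 * 13 * 29, and 840 is a common period of [sol] modulo each factor. *)
Definition residue_modulus : Z := 84825.

Definition residue_step (ab : Z * Z) : Z * Z :=
  ((4 * fst ab - snd ab) mod residue_modulus, (fst ab + 4 * snd ab) mod residue_modulus).

Fixpoint sol_residues (n : nat) : Z * Z :=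
  match n with O => (1, 1) | S k => residue_step (sol_residues k) end.

Lemma mod_lin_comb M k l a b :
  (k * (a mod M) + l * (b mod M)) mod M = (k * a + l * b) mod M.
Proof.
  rewrite Zplus_mod, !Zmult_mod_idemp_r, <- Zplus_mod. reflexivity.
Qed.

Lemma sol_residuesE n :
  sol_residues n = (solx n mod residue_modulus, soly n mod residue_modulus).
Proof.
  induction n as [|n IH]; [reflexivity|].
  cbn [sol_residues]. rewrite IH. unfold residue_step; cbn [fst snd].
  rewrite solx_S, soly_S. f_equal.
  - replace (4 * solx n - soly n) with (4 * solx n + -1 * soly n) by ring.
    rewrite <- mod_lin_comb. f_equal; ring.
  - replace (solx n + 4 * soly n) with (1 * solx n + 4 * soly n) by ring.
    rewrite <- mod_lin_comb. f_equal; ring.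
Qed.

Lemma sol_residues_periodic n : sol_residues (n + 840) = sol_residues n.
Proof.
  induction n as [|n IH]; [vm_compute; reflexivity|].
  change (S n + 840)%nat with (S (n + 840)). cbn [sol_residues]. rewrite IH. reflexivity.
Qed.

Lemma sol_residues_mod n : sol_residues n = sol_residues (n mod 840).
Proof.
  induction n as [n IH] using lt_wf_ind.
  destruct (Nat.lt_ge_cases n 840) as [Hn|Hn]; [rewrite Nat.mod_small; auto|].
  replace n with ((n - 840) + 840)%nat at 1 by lia.
  rewrite sol_residues_periodic, IH by lia. f_equal. lia.
Qed.

(* The arguments [a] and [b] stand for the residues of [sol3 n] and [sol5 n]. *)
Definition residues_ok (n : nat) (a b : Z) : bool :=
  (a mod 3 =? 0) && (b mod 5 =? 0)
  && ((n mod 3 =? 0)%nat || negb (a mod 9 =? 0))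
  && ((n mod 5 =? 0)%nat || negb (b mod 25 =? 0))
  && negb (a mod 5 =? 2)
  && (if (n mod 4 =? 1)%nat then negb (b mod 29 =? 24)
      else negb (a mod 5 =? 3) && negb (b mod 13 =? 8)).

Definition residues_ok_at (n : nat) (ab : Z * Z) : bool :=
  negb (Nat.odd n) ||
  if (n mod 4 =? 1)%nat then residues_ok n (fst ab) (snd ab) else residues_ok n (snd ab) (fst ab).

Fixpoint residues_ok_upto (k n : nat) (ab : Z * Z) : bool :=
  match k with
  | O => true
  | S k => residues_ok_at n ab && residues_ok_upto k (S n) (residue_step ab)
  end.

Lemma residues_ok_uptoP k n :
  residues_ok_upto k n (sol_residues n) = true ->
  forall j, (j < k)%nat -> residues_ok_at (n + j) (sol_residues (n + j)) = true.
Proof.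
  revert n; induction k as [|k IH]; intros n Hk j Hj; [lia|].
  cbn [residues_ok_upto] in Hk. apply andb_prop in Hk as [Hn Hk].
  destruct j as [|j]; [rewrite Nat.add_0_r; exact Hn|].
  rewrite Nat.add_succ_r, <- Nat.add_succ_l. apply (IH (S n)); [exact Hk | lia].
Qed.

Lemma residues_ok_table : residues_ok_upto 840 0 (1, 1) = true.
Proof. vm_compute. reflexivity. Qed.

Lemma residues_ok_mod n a b :
  residues_ok n a b =
  residues_ok (n mod 840) (a mod residue_modulus) (b mod residue_modulus).
Proof.
  unfold residues_ok, residue_modulus.
  rewrite !(Z.mod_mod_divide _ 84825) by (apply Z.mod_divide; [discriminate | reflexivity]).
  replace ((n mod 840) mod 3)%nat with (n mod 3)%nat by lia.
  replace ((n mod 840) mod 4)%nat with (n mod 4)%nat by lia.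
  replace ((n mod 840) mod 5)%nat with (n mod 5)%nat by lia.
  reflexivity.
Qed.

Lemma sol35_residues_ok n : (n mod 2 = 1)%nat -> residues_ok n (sol3 n) (sol5 n) = true.
Proof.
  intros Hn. rewrite residues_ok_mod.
  assert (Hr := residues_ok_uptoP 840 0 residues_ok_table (n mod 840) ltac:(lia)).
  unfold residues_ok_at in Hr. rewrite Nat.add_0_l, <- sol_residues_mod, sol_residuesE in Hr.
  replace (Nat.odd (n mod 840)) with true in Hr by (symmetry; apply Nat.odd_spec; exists ((n mod 840) / 2)%nat; lia).
  replace ((n mod 840) mod 4)%nat with (n mod 4)%nat in Hr by lia.
  cbn [negb orb fst snd] in Hr.
  unfold sol3, sol5. destruct (n mod 4 =? 1)%nat; exact Hr.
Qed.

Lemma sol35_residues n : (n mod 2 = 1)%nat ->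
  sol3 n mod 3 = 0 /\ sol5 n mod 5 = 0 /\
  ((n mod 3 <> 0)%nat -> sol3 n mod 9 <> 0) /\
  ((n mod 5 <> 0)%nat -> sol5 n mod 25 <> 0) /\
  sol3 n mod 5 <> 2 /\
  ((n mod 4 = 1)%nat -> sol5 n mod 29 <> 24) /\
  ((n mod 4 <> 1)%nat -> sol3 n mod 5 <> 3 /\ sol5 n mod 13 <> 8).
Proof.
  intros Hn. pose proof (sol35_residues_ok n Hn) as H. unfold residues_ok in H.
  destruct (n mod 4 =? 1)%nat eqn:H4; apply Nat.eqb_eq in H4 || apply Nat.eqb_neq in H4;
  rewrite ?Bool.andb_true_iff, ?Bool.orb_true_iff, ?Bool.negb_true_iff, ?Z.eqb_eq, ?Z.eqb_neq,
    ?Nat.eqb_eq in H; intuition.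
Qed.

Section LiftingTheExponent.

Local Open Scope gauss_scope.

Variable B : gauss.

Lemma pow_one_plus_5 s :
  exists R, (1%:G + 5%:G * B) ^ s = 1%:G + 5%:G * (Z.of_nat s)%:G * B + 25%:G * R.
Proof.
  induction s as [|s [R HR]]; [exists 0%:G; cbn [gpow Z.of_nat]; ring|].
  exists ((Z.of_nat s)%:G * B * B + R * (1%:G + 5%:G * B)).
  cbn [gpow]. rewrite HR, Nat2Z.inj_succ. unfold Z.succ. rewrite gconst_add. ring.
Qed.

(* Lifting the exponent: if [5] does not divide [s] expand binomially, otherwise raise the
   case [s / 5] to the fifth power; each factor [5] of [s] adds one factor [5] to [K]. *)
Lemma pow_one_plus_5_sub1 s : (0 < s)%nat ->
  exists K u R, K <> 0%Z /\ (u mod 5 <> 0)%Z /\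
    (1%:G + 5%:G * B) ^ s - 1%:G = 5%:G * K%:G * (u%:G * B + 5%:G * R).
Proof.
  induction s as [s IH] using lt_wf_ind. intros Hs.
  destruct (Nat.eq_dec (s mod 5) 0) as [H5|H5].
  - destruct (IH (s / 5)%nat ltac:(lia) ltac:(lia)) as (K & u & R & HK & Hu & HE).
    set (xi := u%:G * B + 5%:G * R) in HE.
    exists (5 * K)%Z, u,
      (R + 2%:G * K%:G * xi ^ 2 + 10%:G * (K * K)%Z%:G * xi ^ 3
         + 25%:G * (K * K * K)%Z%:G * xi ^ 4 + 25%:G * (K * K * K * K)%Z%:G * xi ^ 5).
    split; [lia|]. split; [exact Hu|].
    replace s with (s / 5 * 5)%nat at 1 by lia. rewrite gpow_mul.
    replace ((1%:G + 5%:G * B) ^ (s / 5)) with (1%:G + 5%:G * K%:G * xi)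
      by (rewrite <- HE; ring).
    rewrite !gconst_mul. unfold xi. cbn [gpow]. ring.
  - destruct (pow_one_plus_5 s) as [R HR].
    exists 1%Z, (Z.of_nat s), R. split; [lia|]. split; [lia|].
    rewrite HR. ring.
Qed.

Lemma gre_mul_pow_one_plus_5 w s : (0 < s)%nat -> (gre (w * B) mod 5 <> 0)%Z ->
  gre (w * (1%:G + 5%:G * B) ^ s) <> gre w.
Proof.
  intros Hs Hw. destruct (pow_one_plus_5_sub1 s Hs) as (K & u & R & HK & Hu & HE).
  assert (E : w * (1%:G + 5%:G * B) ^ s = w + 5%:G * K%:G * (u%:G * (w * B) + 5%:G * (w * R))).
  { transitivity (w + w * ((1%:G + 5%:G * B) ^ s - 1%:G)); [ring|]. rewrite HE. ring. }
  assert (Ere : gre (w * (1%:G + 5%:G * B) ^ s)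
                = (gre w + 5 * K * (u * gre (w * B) + 5 * gre (w * R)))%Z)
    by (rewrite E; cbn [gre gim gadd gmul gconst]; ring).
  rewrite Ere. intro Heq.
  assert (Hz : (u * gre (w * B) + 5 * gre (w * R) = 0)%Z) by nia.
  apply (mul_mod_prime_neq0 5 u _ prime_5 Hu Hw).
  replace (u * gre (w * B))%Z with (- gre (w * R) * 5)%Z by lia. apply Z_mod_mult.
Qed.

Lemma gim_mul_pow_one_plus_5 w s : (0 < s)%nat -> (gim (w * B) mod 5 <> 0)%Z ->
  gim (w * (1%:G + 5%:G * B) ^ s) <> gim w.
Proof.
  assert (Him : forall z, gim z = gre (Gauss 0 (-1) * z)) by (intros; cbn [gre gim gmul]; ring).
  intros Hs Hw. rewrite Him in Hw. rewrite !Him.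
  replace (Gauss 0 (-1) * (w * B)) with ((Gauss 0 (-1) * w) * B) in Hw by ring.
  replace (Gauss 0 (-1) * (w * (1%:G + 5%:G * B) ^ s))
    with ((Gauss 0 (-1) * w) * (1%:G + 5%:G * B) ^ s) by ring.
  exact (gre_mul_pow_one_plus_5 _ s Hs Hw).
Qed.

End LiftingTheExponent.

Definition beta : gauss := Gauss 32 48.

Lemma sol_add_mul4 n s : sol (n + 4 * s) = (sol n * (1%:G + 5%:G * beta) ^ s)%G.
Proof.
  unfold sol. rewrite gpow_add, gpow_mul.
  change (Gauss 4 1 ^ 4)%G with (1%:G + 5%:G * beta)%G. ring.
Qed.

Lemma solx_add_mul4_neq n s :
  (0 < s)%nat -> gre (sol n * beta)%G mod 5 <> 0 -> solx (n + 4 * s) <> solx n.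
Proof. intros Hs Hn. unfold solx. rewrite sol_add_mul4. exact (gre_mul_pow_one_plus_5 _ _ _ Hs Hn). Qed.

Lemma soly_add_mul4_neq n s :
  (0 < s)%nat -> gim (sol n * beta)%G mod 5 <> 0 -> soly (n + 4 * s) <> soly n.
Proof. intros Hs Hn. unfold soly. rewrite sol_add_mul4. exact (gim_mul_pow_one_plus_5 _ _ _ Hs Hn). Qed.

Lemma sol3_eq_pm3 n : (n mod 2 = 1)%nat -> sol3 n = 3 \/ sol3 n = -3 -> n = 1%nat.
Proof.
  intros Hn H3. destruct (sol35_residues n Hn) as (_ & _ & _ & _ & Hm5 & _ & Hm3).
  unfold sol3 in *. destruct (Nat.eqb_spec (n mod 4) 1) as [H4|H4].
  - destruct H3 as [H3|H3]; [|rewrite H3 in Hm5; easy].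
    replace n with (1 + 4 * (n / 4))%nat in H3 |- * by lia.
    destruct (n / 4)%nat as [|s]; [reflexivity|].
    exfalso. apply (solx_add_mul4_neq 1 (S s)); [lia | vm_compute; easy | exact H3].
  - destruct (Hm3 H4) as [Hm3' _]. destruct H3 as [H3|H3]; rewrite H3 in Hm5, Hm3'; easy.
Qed.

Lemma sol5_eq_pm5 n : (n mod 2 = 1)%nat -> sol5 n = 5 \/ sol5 n = -5 -> n = 1%nat \/ n = 3%nat.
Proof.
  intros Hn H5. destruct (sol35_residues n Hn) as (_ & _ & _ & _ & _ & Hm29 & Hm13).
  unfold sol5 in *. destruct (Nat.eqb_spec (n mod 4) 1) as [H4|H4].
  - destruct H5 as [H5|H5]; [|rewrite H5 in Hm29; specialize (Hm29 H4); easy].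
    left. replace n with (1 + 4 * (n / 4))%nat in H5 |- * by lia.
    destruct (n / 4)%nat as [|s]; [reflexivity|].
    exfalso. apply (soly_add_mul4_neq 1 (S s)); [lia | vm_compute; easy | exact H5].
  - destruct H5 as [H5|H5]; [|rewrite H5 in Hm13; destruct (Hm13 H4); easy].
    right. replace n with (3 + 4 * (n / 4))%nat in H5 |- * by lia.
    destruct (n / 4)%nat as [|s]; [reflexivity|].
    exfalso. apply (solx_add_mul4_neq 3 (S s)); [lia | vm_compute; easy | exact H5].
Qed.

Lemma pow_cases r m : (1 <= m)%nat ->
  r ^ Z.of_nat m = r \/ r ^ Z.of_nat m = r * r \/ (r ^ Z.of_nat m) mod (r * r * r) = 0.
Proof.
  intros Hm. destruct m as [|[|[|m]]]; [lia | left; apply Z.pow_1_r | right; left; change (r ^ 2 = r * r); ring |].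
  right; right. replace (Z.of_nat (S (S (S m)))) with (Z.of_nat m + 3) by lia.
  rewrite Z.pow_add_r by lia. replace (r ^ 3) with (r * r * r) by ring. apply Z_mod_mult.
Qed.

Lemma abs_eq_pow_cases r m D : 0 < r -> (1 <= m)%nat ->
  Z.abs D = r ^ Z.of_nat m -> D mod (r * r) <> 0 -> D = r \/ D = - r.
Proof.
  intros Hr Hm HD Hn. destruct (pow_cases r m Hm) as [H|[H|H]]; [lia | exfalso; apply Hn ..].
  - assert (E : D = r * r \/ D = - (r * r)) by lia.
    destruct E as [-> | ->]; [apply Z_mod_same_full | apply Z_mod_zero_opp_full, Z_mod_same_full].
  - rewrite <- HD in H. apply Z.mod_divide in H; [|nia]. apply Z.mod_divide; [nia|].
    apply Z.divide_abs_r. apply (Z.divide_trans _ (r * r * r)); [exists r; ring | exact H].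
Qed.

Lemma abs_mod_eq0 a r : a mod r = 0 -> Z.abs a mod r = 0.
Proof.
  intros H. destruct (Z.abs_spec a) as [[_ ->]|[_ ->]]; [exact H|].
  apply Z_mod_zero_opp_full, H.
Qed.

Lemma primitive_solution_prime_power p X Y :
  (p mod 2 = 1)%nat -> p <> 1%nat ->
  ((p mod 3 = 0)%nat -> p = 3%nat) -> ((p mod 5 = 0)%nat -> p = 5%nat) ->
  (forall r, (r = 3 \/ r = 5) -> Y mod r = 0 -> exists m, (1 <= m)%nat /\ Y = r ^ Z.of_nat m) ->
  0 <= X -> 0 <= Y -> X ^ 2 + Y ^ 2 = 2 * 17 ^ Z.of_nat p -> primitive17 X Y ->
  p = 3%nat /\ Y = 5 /\ X = 99.
Proof.
  intros Hp Hp1 Hp3 Hp5 HY HX0 HY0 Hsum Hprim.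
  pose proof (sol_pair_sol35 p X Y (sol_pair_of_sum_sq p X Y Hsum Hprim)) as Hpair.
  clear Hsum Hprim. rewrite (Z.abs_eq X), (Z.abs_eq Y) in Hpair by assumption.
  destruct (sol35_residues p Hp) as (H3 & H5 & H9 & H25 & _).
  destruct Hpair as [[EX EY]|[EX EY]].
  - destruct (HY 3 (or_introl eq_refl)) as (m & Hm & Hpow);
      [rewrite EY; exact (abs_mod_eq0 _ _ H3)|].
    rewrite Hpow in EY. symmetry in EY.
    destruct (Nat.eq_dec (p mod 3) 0) as [Hp0|Hp0].
    + exfalso. rewrite (Hp3 Hp0) in EY. change (sol3 3) with 99 in EY.
      destruct (pow_cases 3 m Hm) as [E|[E|E]]; rewrite <- EY in E; discriminate.
    + destruct (abs_eq_pow_cases 3 m (sol3 p) ltac:(lia) Hm EY (H9 Hp0)) as [E|E];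
        exact (False_ind _ (Hp1 (sol3_eq_pm3 p Hp (or_introl E))))
        || exact (False_ind _ (Hp1 (sol3_eq_pm3 p Hp (or_intror E)))).
  - destruct (HY 5 (or_intror eq_refl)) as (m & Hm & Hpow);
      [rewrite EY; exact (abs_mod_eq0 _ _ H5)|].
    rewrite Hpow in EY. symmetry in EY.
    destruct (Nat.eq_dec (p mod 5) 0) as [Hp0|Hp0].
    + exfalso. rewrite (Hp5 Hp0) in EY. change (sol5 5) with 1525 in EY.
      destruct (pow_cases 5 m Hm) as [E|[E|E]]; rewrite <- EY in E; discriminate.
    + pose proof (abs_eq_pow_cases 5 m (sol5 p) ltac:(lia) Hm EY (H25 Hp0)) as Hpm.
      destruct (sol5_eq_pm5 p Hp Hpm) as [->| ->]; [contradiction|].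
      split; [reflexivity|]. rewrite Hpow, <- EY, EX. split; reflexivity.
Qed.

Lemma sq_add_1_neq_2_17_pow k x : (k mod 2 = 1)%nat -> x ^ 2 + 1 <> 2 * 17 ^ Z.of_nat k.
Proof.
  intros Hk Hsum.
  assert (Hpair : sol_pair k x 1) by (apply sol_pair_of_sum_sq; [exact Hsum | intros [_ H]; discriminate]).
  apply sol_pair_sol35 in Hpair.
  destruct (sol35_residues k Hk) as (H3 & H5 & _).
  destruct Hpair as [[_ E]|[_ E]].
  - pose proof (abs_mod_eq0 _ _ H3) as H. rewrite <- E in H. discriminate.
  - pose proof (abs_mod_eq0 _ _ H5) as H. rewrite <- E in H. discriminate.
Qed.

Lemma sq_add_sq_17_pow_neq_2_17_pow m j X :
  (j mod 2 = 1)%nat -> X ^ 2 + (17 ^ Z.of_nat m) ^ 2 <> 2 * 17 ^ Z.of_nat j.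
Proof.
  revert j X; induction m as [|m IH]; intros j X Hj Hsum.
  - exact (sq_add_1_neq_2_17_pow j X Hj Hsum).
  - assert (HT : 0 < 17 ^ Z.of_nat m) by (apply Z.pow_pos_nonneg; lia).
    rewrite pow17_S in Hsum.
    destruct j as [|[|j]]; [simpl in Hj; lia | change (17 ^ Z.of_nat 1) with 17 in Hsum; nia |].
    rewrite !pow17_S in Hsum.
    assert (HX : X mod 17 = 0).
    { destruct (Z.eq_dec (X mod 17) 0) as [H|H]; [exact H | exfalso].
      apply (mul_mod_prime_neq0 17 X X prime_17 H H).
      replace (X * X) with ((2 * 17 ^ Z.of_nat j - (17 ^ Z.of_nat m) ^ 2) * 17 * 17) by nia.
      apply Z_mod_mult. }
    apply (IH j (X / 17)); [lia|].
    replace X with (17 * (X / 17)) in Hsum by lia. nia.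
Qed.

Local Close Scope Z_scope.

From mathcomp Require Import all_boot zify.

Lemma Z_of_nat_expn a b : Z.of_nat (a ^ b) = (Z.of_nat a ^ Z.of_nat b)%Z.
Proof.
  elim: b => [|b IH] //.
  by rewrite expnS Nat2Z.inj_succ Z.pow_succ_r ?mulnE ?Nat2Z.inj_mul ?IH 1?Z.mul_comm; last lia.
Qed.

Lemma prime_dvd_expn r q m : prime r -> prime q -> r %| q ^ m -> r = q.
Proof.
  move=> pr_r pr_q; rewrite Euclid_dvdX // => /andP [r_dvd_q _].
  by apply/eqP; rewrite -dvdn_prime2.
Qed.

Lemma dvdn_of_mod0 n r : (n mod r = 0)%coq_nat -> r %| n.
Proof. by move=> /Nat.Lcm0.mod_divide [k ->]; apply/dvdnP; exists k. Qed.

Lemma prime_eq_of_mod0 p r : prime p -> prime r -> (p mod r = 0)%coq_nat -> p = r.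
Proof. by move=> pr_p pr_r /dvdn_of_mod0; rewrite dvdn_prime2 // => /eqP. Qed.

Lemma prime_eq_of_expn_mod0 q m r : prime q -> prime r ->
  (Z.of_nat (q ^ m) mod Z.of_nat r = 0)%Z -> q = r.
Proof.
  move=> pr_q pr_r; rewrite -Nat2Z.inj_mod => /(Nat2Z.inj _ 0) /dvdn_of_mod0.
  by move=> /(prime_dvd_expn r q m pr_r pr_q) ->.
Qed.

Lemma prime_eq_of_expn_eq q m r : prime q -> prime r -> q ^ m = r -> q = r /\ m = 1.
Proof.
  move=> pr_q pr_r qm_r.
  have q_r : q = r by apply: esym; apply: (prime_dvd_expn r q m) => //; rewrite qm_r.
  split=> //; apply/eqP; rewrite -(eqn_exp2l _ _ (prime_gt1 pr_r)) expn1 -{1}q_r.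
  by rewrite qm_r.
Qed.

Lemma sum_sq_Z_of_nat x q m p :
  x ^ 2 + q ^ (2 * m) = 2 * 17 ^ p ->
  (Z.of_nat x ^ 2 + Z.of_nat (q ^ m) ^ 2 = 2 * 17 ^ Z.of_nat p)%Z.
Proof.
  move=> E; rewrite -!(Z_of_nat_expn _ 2) -(Z_of_nat_expn 17) -expnM mulnC; lia.
Qed.

Lemma primitive17_prime_expn x q m : prime q -> q != 17 -> primitive17 x (Z.of_nat (q ^ m)).
Proof.
  move=> pr_q q_neq17 [_ /(prime_eq_of_expn_mod0 q m 17 pr_q isT) q17].
  by rewrite q17 in q_neq17.
Qed.

Theorem theorem3 (m p q x : nat) :
  0 < m -> 0 < x -> prime p -> odd p -> prime q -> odd q ->
  x ^ 2 + q ^ (2 * m) = 2 * 17 ^ p ->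
  (m, p, q, x) = (1, 3, 5, 99).
Proof.
  move=> m_gt0 _ pr_p odd_p pr_q _ /sum_sq_Z_of_nat E.
  have p_odd : (p mod 2 = 1)%coq_nat by lia.
  have [q17 | q_neq17] := eqVneq q 17.
    by rewrite q17 Z_of_nat_expn in E; case: (sq_add_sq_17_pow_neq_2_17_pow m p _ p_odd E).
  have q_pow r : r = 3%Z \/ r = 5%Z -> (Z.of_nat (q ^ m) mod r = 0)%Z ->
      exists m', (1 <= m')%coq_nat /\ Z.of_nat (q ^ m) = (r ^ Z.of_nat m')%Z.
    move=> r35; have [n [-> pr_n]] : exists n, r = Z.of_nat n /\ prime n.
      by case: r35 => ->; [exists 3 | exists 5].
    move=> /(prime_eq_of_expn_mod0 q m n pr_q pr_n) <-.
    by exists m; split; [lia | rewrite Z_of_nat_expn].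
  have p_neq1 : p <> 1 by move=> p1; rewrite p1 in pr_p.
  have [-> [qm5 x99]] := primitive_solution_prime_power p (Z.of_nat x) (Z.of_nat (q ^ m))
    p_odd p_neq1 (prime_eq_of_mod0 p 3 pr_p isT) (prime_eq_of_mod0 p 5 pr_p isT) q_pow
    (Zle_0_nat x) (Zle_0_nat _) E (primitive17_prime_expn _ q m pr_q q_neq17).
  have [-> ->] : q = 5 /\ m = 1 by apply: prime_eq_of_expn_eq => //; lia.
  by rewrite (_ : x = 99) //; lia.
Qed.
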